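(* Let $G = (V,E)$ be an $n$-vertex graph. There exists a partition $V = V_1 \cup \ldots \cup V_t$ of $V$ such that: (i) $t \leq 19\,\alpha(G) \log n$; (ii) $\sum_{i \in J} |V_i| \geq n/2$, where $J := \{i \in [t] : |V_i| \geq 0.1\, n/\alpha(G)\}$; (iii) $|V_i| \geq \delta(G)/\log n$ for every $i \in [t]$; (iv) $\kappa(G[V_i]) \geq \frac{\delta(G)}{20\,\alpha(G) \log n}$ for every $i \in [t]$.
   Context: $\alpha(G)$ is the independence number, $\delta(G)$ the minimum degree, and $\kappa(H)$ the vertex connectivity of a graph $H$ (the smallest size of a vertex set whose removal disconnects $H$ or leaves a single vertex). $G[V_i]$ is the induced subgraph. *)

From mathcomp Require Import all_boot.
From Stdlib Require Import Reals.
Set Implicit Arguments. Unset Strict Implicit. Unset Printing Implicit Defensive.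

Section Graphs.
Variable T : finType.
(* A finite simple graph on vertex set T is a symmetric irreflexive relation e. *)
Variable e : rel T.

Definition induced_rel (W : {set T}) : rel T :=
  fun x y => [&& e x y, x \in W & y \in W].

Definition disconnected_on (W : {set T}) : bool :=
  [exists x in W, exists y in W, ~~ connect (induced_rel W) x y].

Definition separating (W S : {set T}) : bool :=
  (S \subset W) && (disconnected_on (W :\: S) || (#|W :\: S| == 1)).

Definition kappa (W : {set T}) : nat :=
  \big[minn/#|W|]_(S : {set T} | separating W S) #|S|.

Definition independent (S : {set T}) : bool :=
  [forall x in S, forall y in S, ~~ e x y].

Definition alpha : nat := \max_(S : {set T} | independent S) #|S|.

Definition degree (v : T) : nat := #|[set u | e v u]|.

(* minimum degree delta(G) (the default #|T| is irrelevant when T is nonempty) *)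
Definition delta : nat := \big[minn/#|T|]_(v : T) degree v.
End Graphs.

Definition Rleb (x y : R) : bool := if Rle_dec x y then true else false.

(* Put k = delta / (20 alpha log n), so that (2 alpha - 1) k <= delta.  Starting from
   the single piece V, maintain a family P of nonempty, pairwise non-adjacent pieces
   leaving at most (|P| - 1) k vertices uncovered.  A vertex of a piece has all its
   neighbours in its piece or uncovered, so every piece has more than
   delta - (alpha - 1) k >= k vertices; one vertex per piece is an independent set, so
   |P| <= alpha.  Hence, while some piece has a separator of size < k, splitting it
   along the separator (whose vertices become uncovered) preserves the invariant, and
   this stops after fewer than alpha steps with all pieces k-connected.  Finally each
   uncovered vertex has at least k neighbours in some piece, as otherwise its degree
   would be below |P| k + (alpha - 1) k <= delta, and attaching it there keeps the piece
   k-connected.  The at most alpha blocks obtained have at least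
   delta + 1 - (alpha - 1) k >= delta / log n vertices each, and those smaller than
   n / (10 alpha) cover at most n / 10 vertices. *)

From mathcomp Require Import all_boot all_order zify.
From Stdlib Require Import Reals Lra Lia Classical.
Set Implicit Arguments. Unset Strict Implicit. Unset Printing Implicit Defensive.

Local Open Scope R_scope.

Lemma ln_le x y : 0 < x -> x <= y -> ln x <= ln y.
Proof. by move=> x_gt0 [/(ln_increasing _ _ x_gt0)/Rlt_le | ->]; [|apply: Rle_refl]. Qed.

Lemma ln2_ge : 3/5 <= ln 2.
Proof.
(* [exp (-1/5) >= 4/5] gives [exp (3/5) <= (5/4)^3 < 2]. *)
have e_gt0 := exp_pos (1/5).
have e15_le : exp (1/5) <= 5/4.
  have := exp_ineq1_le (-(1/5)); rewrite exp_Ropp => inv_ge.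
  apply: (Rmult_le_reg_r (/ exp (1/5))); first exact: Rinv_0_lt_compat.
  rewrite Rinv_r; [nra | lra].
have e35 : exp (3/5) = exp (1/5) * exp (1/5) * exp (1/5).
  by rewrite -!exp_plus; congr exp; lra.
rewrite -[3/5]ln_exp; apply: ln_le; first exact: exp_pos.
rewrite e35; nra.
Qed.

Lemma ln3_ge : 1 <= ln 3.
Proof. by rewrite -[1]ln_exp; apply: ln_le; [apply: exp_pos | apply: exp_le_3]. Qed.

Lemma ln_INR_ge (n : nat) : (2 <= n)%nat -> 3/5 <= ln (INR n).
Proof.
move=> /leP/le_INR n_ge2; apply: (Rle_trans _ _ _ ln2_ge); apply: ln_le; first lra.
by move: n_ge2 => /=; lra.
Qed.

Lemma succ_mul_ln_INR_ge (n d : nat) : (2 <= n)%nat -> (d < n)%nat ->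
  21/20 * INR d <= (INR d + 1) * ln (INR n).
Proof.
move=> n_ge2 d_lt_n; have d_ge0 := pos_INR d.
have /leP/le_INR d_le := d_lt_n; rewrite S_INR in d_le.
have ln_ge := ln_INR_ge n_ge2.
have [n_le3 | n_gt3] := leqP n 3.
  have {}d_le : INR d <= 2 by apply/(le_INR _ 2)/leP; lia.
  have [n2 | n3] : n = 2%nat \/ n = 3%nat by lia.
    have : INR d <= 1 by apply/(le_INR _ 1)/leP; lia.
    nra.
  have -> : INR n = 3 by rewrite n3 /=; lra.
  have := ln3_ge; nra.
have ln4 : 6/5 <= ln (INR n).
  have /leP/le_INR : (4 <= n)%nat by [].
  rewrite /= => n_ge4; apply: (Rle_trans _ (ln (2 * 2))); last by apply: ln_le; lra.
  by rewrite ln_mult; have := ln2_ge; lra.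
nra.
Qed.

Section LogBounds.
Variables n d a : nat.
Hypotheses (n_ge2 : (2 <= n)%nat) (a_gt0 : (0 < a)%nat).

Let L := ln (INR n).
Let k := INR d / (20 * INR a * L).

Let L_ge : 3/5 <= L. Proof. exact: ln_INR_ge. Qed.
Let a_ge1 : 1 <= INR a. Proof. exact/(le_INR 1)/leP. Qed.
Let k_def : k * (20 * INR a * L) = INR d. Proof. rewrite /k; field; nra. Qed.

Lemma log_threshold_ge0 : 0 <= k.
Proof. by apply: Rle_mult_inv_pos; [apply: pos_INR | nra]. Qed.

Lemma log_threshold_mul_le : (2 * INR a - 1) * k <= INR d.
Proof.
rewrite -k_def Rmult_comm; apply: Rmult_le_compat_l; first exact: log_threshold_ge0.
nra.
Qed.

Lemma INR_le_log_bound m : (m <= a)%nat -> INR m <= 19 * INR a * L.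
Proof. by move/leP/le_INR; nra. Qed.

Lemma log_block_size s : (d < n)%nat ->
  INR d + 1 - (INR a - 1) * k <= s -> INR d / L <= s.
Proof.
move=> d_lt_n s_ge; have := succ_mul_ln_INR_ge n_ge2 d_lt_n; rewrite -/L => dL.
have d_ge0 := pos_INR d; have k_ge0 := log_threshold_ge0.
have dk : INR d = 20 * INR a * L * k by rewrite -k_def; ring.
have -> : INR d / L = 20 * INR a * k by rewrite dk; field; lra.
nra.
Qed.
End LogBounds.

Local Close Scope R_scope.

Lemma leq_card_bigcup (T I : finType) (P : pred I) (F : I -> {set T}) :
  #|\bigcup_(i | P i) F i| <= \sum_(i | P i) #|F i|.
Proof.
elim/big_rec2: _ => [|i U n _ le_Un]; first by rewrite cards0.
exact: leq_trans (leq_card_setU _ _) (leq_add (leqnn _) le_Un).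
Qed.

Section Graph.
Variables (T : finType) (e : rel T).
Hypotheses (e_sym : symmetric e) (e_irr : irreflexive e).
Implicit Types (A B S U V W : {set T}) (P : {set {set T}}).

Lemma delta_le_degree v : delta e <= degree e v.
Proof. by have := Order.TotalTheory.bigmin_le #|T| v (degree e); rewrite minEnat. Qed.

Lemma degree_lt_card v : degree e v < #|T|.
Proof.
rewrite -cardsT (cardsD1 v) in_setT ltnS; apply/subset_leq_card/subsetP => u.
by rewrite !inE andbT; apply: contraTneq => ->; rewrite e_irr.
Qed.

Lemma alpha_gt0 : 0 < #|T| -> 0 < alpha e.
Proof.
case/card_gt0P => x _; rewrite -(cards1 x); apply: leq_bigmax_cond.
by apply/forall_inP => y /set1P -> ; apply/forall_inP => z /set1P ->; rewrite e_irr.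
Qed.

Lemma delta_lt_card : 0 < #|T| -> delta e < #|T|.
Proof. by case/card_gt0P => v _; apply: leq_ltn_trans (delta_le_degree v) (degree_lt_card v). Qed.

Definition apart (A B : {set T}) : Prop :=
  forall x y, x \in A -> y \in B -> x != y /\ ~~ e x y.

Lemma apart_sym A B : apart A B -> apart B A.
Proof. by move=> AB x y xB yA; case: (AB y x yA xB); rewrite eq_sym e_sym. Qed.

Lemma apart_sub A B (A' B' : {set T}) : A' \subset A -> B' \subset B -> apart A B -> apart A' B'.
Proof. by move=> /subsetP sA /subsetP sB AB x y /sA xA /sB yB; apply: AB. Qed.

Definition apart_family (P : {set {set T}}) : Prop :=
  set0 \notin P /\ {in P &, forall A B, A != B -> apart A B}.

Lemma card_apart_family_le_alpha P : apart_family P -> #|P| <= alpha e.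
Proof.
case=> P0 aP; have [-> | [W WP]] := set_0Vmem P; first by rewrite cards0.
have nonempty A : A \in P -> exists x, x \in A.
  by move=> AP; apply/set0Pn; apply: contraNneq P0 => <-.
have [x0 _] := nonempty W WP.
have /fin_all_exists [rep repA] : forall A : {set T}, exists x, A \in P -> x \in A.
  move=> A; case: (boolP (A \in P)) => [/nonempty [x xA] | AnP].
    by exists x.
  by exists x0 => AP; case/negP: AnP.
have rep_apart A B : A \in P -> B \in P -> A != B -> rep A != rep B /\ ~~ e (rep A) (rep B).
  by move=> AP BP AB; apply: (aP A B AP BP AB); apply: repA.
have rep_inj : {in P &, injective rep}.
  move=> A B AP BP; apply: contra_eq => AB.
  by have [] := rep_apart A B AP BP AB.
rewrite -(card_in_imset rep_inj); apply: leq_bigmax_cond.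
apply/forall_inP => _ /imsetP [A AP ->]; apply/forall_inP => _ /imsetP [B BP ->].
by have [-> | AB] := eqVneq A B; [rewrite e_irr | case: (rep_apart A B AP BP AB)].
Qed.

Lemma apart_family_neighbour P W v y : apart_family P -> W \in P -> v \in W -> e v y ->
  y \in W :|: ~: cover P.
Proof.
case=> _ aP WP vW evy; rewrite in_setU in_setC; apply/orP.
case: (boolP (y \in cover P)) => [/bigcupP [B BP yB] | _]; last by right.
left; have [-> // | WB] := eqVneq W B.
by have [_] := aP W B WP BP WB v y vW yB; rewrite evy.
Qed.

Lemma apart_family_card_ge P W : apart_family P -> W \in P ->
  delta e + 1 <= #|W| + #|~: cover P|.
Proof.
move=> aP WP; have [v vW] : exists v, v \in W.
  by apply/set0Pn; apply: contraNneq aP.1 => <-.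
have sub : [set u | e v u] \subset (W :\ v) :|: ~: cover P.
  apply/subsetP => y; rewrite inE => evy.
  have yv : y != v by apply: contraTneq evy => ->; rewrite e_irr.
  by have := apart_family_neighbour aP WP vW evy; rewrite !inE yv.
have := leq_trans (delta_le_degree v) (leq_trans (subset_leq_card sub) (leq_card_setU _ _)).
by rewrite (cardsD1 v W) vW; lia.
Qed.

Lemma induced_rel_sym U : symmetric (induced_rel e U).
Proof. by move=> x y; rewrite /induced_rel e_sym [(x \in U) && _]andbC. Qed.

Lemma connect_induced_sub U V : U \subset V ->
  subrel (connect (induced_rel e U)) (connect (induced_rel e V)).
Proof.
move=> /subsetP UV; apply: connect_sub => x y /and3P [exy xU yU].
by apply: connect1; rewrite /induced_rel exy !UV.
Qed.

Lemma disconnected_split U : disconnected_on e U ->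
  exists X Y, [/\ X :|: Y = U, X != set0, Y != set0 & apart X Y].
Proof.
case/exists_inP => x xU /exists_inP [y yU xy].
pose X := [set z in U | connect (induced_rel e U) x z].
have XU : X \subset U by apply/subsetP => z; rewrite inE => /andP[].
have xX : x \in X by rewrite inE xU connect0.
have yX : y \notin X by rewrite inE yU.
exists X, (U :\: X); split.
- by rewrite -{1}(setIidPr XU) setID.
- by apply/set0Pn; exists x.
- by apply/set0Pn; exists y; rewrite inE yX.
move=> z w; rewrite !inE => /andP [zU xz] /andP [wX wU]; split.
  by apply: contraNneq wX => <-; rewrite zU.
apply: contraNN wX => ezw; rewrite wU; apply: connect_trans xz (connect1 _).
by rewrite /induced_rel ezw zU wU.
Qed.

Lemma connected_setU1 U u a : ~~ disconnected_on e U -> a \in U -> e u a ->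
  ~~ disconnected_on e (u |: U).
Proof.
move=> Uconn aU eua.
have to_a z : z \in u |: U -> connect (induced_rel e (u |: U)) z a.
  case/setU1P => [-> | zU].
    by apply: connect1; rewrite /induced_rel eua setU11 setU1r.
  apply: connect_induced_sub (subsetUr _ _) _ _ _.
  by apply: contraNT Uconn => za; apply/exists_inP; exists z => //; apply/exists_inP; exists a.
apply/exists_inP => -[z zU /exists_inP [w wU]]; apply/negP/negPn.
by apply: connect_trans (to_a z zU) _; rewrite (sym_connect_sym (@induced_rel_sym _)) to_a.
Qed.

Lemma apart_subset0 A B : apart A B -> A \subset B -> A = set0.
Proof.
move=> AB /subsetP AsB; apply/setP => x; rewrite inE; apply/negP => xA.
by have [] := AB x x xA (AsB x xA); rewrite eqxx.
Qed.

Definition split_piece P W X Y := [set X; Y] :|: (P :\ W).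

Section Refine.
Variables (P : {set {set T}}) (W S X Y : {set T}).
Hypotheses (aP : apart_family P) (WP : W \in P) (XY_WS : X :|: Y = W :\: S).
Hypotheses (X0 : X != set0) (Y0 : Y != set0) (aXY : apart X Y).

Let XY_W A : A \in [set X; Y] -> A \subset W.
Proof.
move=> AXY; apply: subset_trans (subsetDl W S); rewrite -XY_WS.
by case/set2P: AXY => ->; [apply: subsetUl | apply: subsetUr].
Qed.

Let XY_apart A B : A \in [set X; Y] -> B \in P :\ W -> apart A B.
Proof.
move=> AXY /setD1P [BW BP]; apply: apart_sub (XY_W AXY) (subxx B) _.
by apply: aP.2; rewrite // eq_sym.
Qed.

Let XY_notin A : A \in [set X; Y] -> A \notin P :\ W.
Proof.
move=> AXY; apply/negP => /(XY_apart AXY) /apart_subset0 /(_ (subxx A)) A0.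
by case/set2P: AXY A0 => -> /eqP; apply/negP.
Qed.

Lemma apart_family_split_piece : apart_family (split_piece P W X Y).
Proof.
split.
  apply/negP => /setUP [/set2P [X0' | Y0'] | /setD1P [_ P0]].
  - by move: X0; rewrite -X0' eqxx.
  - by move: Y0; rewrite -Y0' eqxx.
  - by move: aP.1; rewrite P0.
move=> A B /setUP [AXY | AP] /setUP [BXY | BP] AB.
- case/set2P: AXY AB => ->; case/set2P: BXY => -> //; rewrite ?eqxx //.
  by move=> _; apply: apart_sym.
- exact: XY_apart.
- exact/apart_sym/XY_apart.
- by move: AP BP => /setD1P [_ AP] /setD1P [_ BP]; apply: aP.2.
Qed.

Lemma card_split_piece : #|split_piece P W X Y| = #|P|.+1.
Proof.
have XY : X != Y.
  by apply: contra_neq X0 => XY; apply: apart_subset0 aXY _; rewrite XY.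
have disj : [disjoint [set X; Y] & P :\ W].
  apply/pred0P => A /=; case: (boolP (A \in [set X; Y])) => //= AXY.
  exact/negbTE/XY_notin.
rewrite /split_piece; move: disj; rewrite -(leq_card_setU _ _).2 => /eqP ->.
by rewrite cards2 XY (cardsD1 W P) WP.
Qed.

Lemma leftover_split_piece : ~: cover (split_piece P W X Y) \subset ~: cover P :|: S.
Proof.
apply/subsetP => z; rewrite !inE; apply: contraR.
rewrite negb_or !negbK => /andP [/bigcupP [B BP zB] zS].
apply/bigcupP; have [BW | BW] := eqVneq B W; last by exists B; rewrite // !inE BW BP orbT.
have : z \in X :|: Y by rewrite XY_WS inE zS -BW zB.
by case/setUP => zXY; [exists X | exists Y]; rewrite // !inE eqxx ?orbT.
Qed.
End Refine.

Lemma separating_setU1D1 A S u : u \notin A -> u \in S ->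
  separating e (u |: A) S -> separating e A (S :\ u).
Proof.
move=> uA uS /andP [SuA sep]; apply/andP; split.
  apply/subsetP => z /setD1P [zu /(subsetP SuA) /setU1P [zu' | //]].
  by rewrite zu' eqxx in zu.
suff -> : A :\: (S :\ u) = (u |: A) :\: S by [].
apply/setP => z; rewrite !inE; case: (eqVneq z u) => [-> | //].
by rewrite uS (negbTE uA).
Qed.

Lemma separating_setU1 A S u a : ~~ separating e A S -> u \notin S ->
  a \in A :\: S -> e u a -> ~~ separating e (u |: A) S.
Proof.
move=> Asep uS aAS eua; apply: contraNN Asep => /andP [SuA sep].
have SA : S \subset A.
  apply/subsetP => z zS; case/setU1P: (subsetP SuA z zS) => // zu.
  by rewrite -zu zS in uS.
have uAS : (u |: A) :\: S = u |: (A :\: S).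
  by apply/setP => z; rewrite !inE; case: eqVneq => // ->; rewrite (negbTE uS).
rewrite /separating SA /=; move: sep; rewrite uAS => /orP [dis | /cards1P [z uaz]].
  by apply: contraTT dis => /norP [conn _]; apply: connected_setU1 aAS eua.
have /set1P uz : u \in [set z] by rewrite -uaz setU11.
have /set1P az : a \in [set z] by rewrite -uaz setU1r.
by move: eua; rewrite uz az e_irr.
Qed.

Section Threshold.
Variable k : R.

Definition highly_connected A : Prop :=
  (k <= INR #|A|)%R /\ forall S, separating e A S -> (k <= INR #|S|)%R.

Lemma kappa_ge A : highly_connected A -> (k <= INR (kappa e A))%R.
Proof.
case=> kA kS; rewrite /kappa; elim/big_ind: _ => // x y kx ky.
by rewrite /minn; case: ltnP.
Qed.

Lemma highly_connected_setU1 A u : highly_connected A ->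
  (k <= INR #|[set w in A | e u w]|)%R -> highly_connected (u |: A).
Proof.
move=> [kA kS] k_nbr; have [uA | uA] := boolP (u \in A).
  by rewrite (setUidPr _) ?sub1set.
split.
  by apply: Rle_trans kA _; apply/le_INR/leP/subset_leq_card/subsetUr.
move=> S sepS; case: (Rle_or_lt k (INR #|S|)) => // S_lt; exfalso.
have [uS | uS] := boolP (u \in S).
  have /kS := separating_setU1D1 uA uS sepS.
  have : (INR #|S :\ u| <= INR #|S|)%R by apply/le_INR/leP/subset_leq_card/subD1set.
  lra.
have [a /andP [aAS eua]] : exists a, (a \in A :\: S) && e u a.
  apply/existsP; apply: contraT => /existsPn no_nbr; exfalso.
  suff : (INR #|[set w in A | e u w]| <= INR #|S|)%R by lra.
  apply/le_INR/leP/subset_leq_card/subsetP => w.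
  by rewrite inE => /andP [wA euw]; move: (no_nbr w); rewrite !inE wA euw !andbT negbK.
have Asep : ~~ separating e A S.
  by apply/negP => /kS; lra.
by move/negP: (separating_setU1 Asep uS aAS eua).
Qed.

Lemma highly_connected_setU A U : highly_connected A ->
  {in U, forall u, k <= INR #|[set w in A | e u w]|}%R -> highly_connected (A :|: U).
Proof.
move=> hcA k_nbr; rewrite -(set_enum U).
have : all [in U] (enum U) by apply/allP => u; rewrite mem_enum.
elim: (enum U) => [|u s IH] /=; first by rewrite set_nil setU0.
case/andP => uU /IH hcs; rewrite set_cons setUCA.
apply: highly_connected_setU1 hcs (Rle_trans _ _ _ (k_nbr u uU) _).
apply/le_INR/leP/subset_leq_card/subsetP => w; rewrite !inE => /andP [wA ->].
by rewrite wA.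
Qed.

Hypothesis k_ge0 : (0 <= k)%R.

Definition splitting P : Prop :=
  apart_family P /\ (INR #|~: cover P| <= (INR #|P| - 1) * k)%R.

Lemma splitting_leftover_le P : splitting P ->
  (INR #|~: cover P| <= (INR (alpha e) - 1) * k)%R.
Proof.
case=> aP D_le; apply: Rle_trans D_le _; apply: Rmult_le_compat_r => //.
by have /leP/le_INR := card_apart_family_le_alpha aP; lra.
Qed.

Hypothesis delta_ge : ((2 * INR (alpha e) - 1) * k <= INR (delta e))%R.

Lemma splitting_piece_size P W : splitting P -> W \in P ->
  (INR (delta e) + 1 - (INR (alpha e) - 1) * k <= INR #|W|)%R.
Proof.
move=> sP WP; have := splitting_leftover_le sP.
have /leP/le_INR := apart_family_card_ge sP.1 WP; rewrite !plus_INR /=; lra.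
Qed.

Lemma splitting_piece_gt P W : splitting P -> W \in P -> (k + 1 <= INR #|W|)%R.
Proof.
move=> sP WP; have := splitting_piece_size sP WP.
have /leP/(le_INR 1) a_ge1 : (1 <= alpha e)%nat.
  by apply: leq_trans (card_apart_family_le_alpha sP.1); apply/card_gt0P; exists W.
rewrite /= in a_ge1; nra.
Qed.

Lemma splitting_split_step P W : splitting P -> W \in P -> ~ highly_connected W ->
  exists P', splitting P' /\ #|P| < #|P'|.
Proof.
move=> sP WP notHC; have W_gt := splitting_piece_gt sP WP.
have [S [sepS S_lt]] : exists S, separating e W S /\ (INR #|S| < k)%R.
  apply: NNPP => noS; apply: notHC; split; first lra.
  move=> S sepS; apply: Rnot_lt_le => S_lt; apply: noS; by exists S.
case/andP: sepS => SW /orP [/disconnected_split [X [Y [XY_WS X0 Y0 aXY]]] | /eqP WS1].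
  have card_P' := card_split_piece sP.1 WP XY_WS X0 Y0 aXY.
  exists (split_piece P W X Y); rewrite card_P'; split => //.
  split; first exact: (apart_family_split_piece sP.1 WP XY_WS X0 Y0 aXY).
  rewrite card_P'.
  have /subset_leq_card/leP/le_INR := leftover_split_piece P XY_WS.
  have /leP/le_INR := leq_card_setU (~: cover P) S.
  rewrite S_INR plus_INR; have := sP.2; lra.
have /leP/le_INR : #|W| <= #|S| + 1.
  by move: WS1; rewrite cardsD (setIidPr SW); lia.
rewrite plus_INR /=; lra.
Qed.

Lemma splitting_highly_connected P : splitting P ->
  exists2 Q, splitting Q & {in Q, forall W, highly_connected W}.
Proof.
have [m] := ubnP (alpha e - #|P|); elim: m P => // m IH P lt_m sP.
have [allHC | ] := classic (forall W, W \in P -> highly_connected W); first by exists P.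
move=> /not_all_ex_not [W nHC]; have [WP notHC] := imply_to_and _ _ nHC.
have [P' [sP' lt_PP']] := splitting_split_step sP WP notHC.
apply: (IH P' _ sP'); have := card_apart_family_le_alpha sP'.1; lia.
Qed.

Lemma leftover_dense_piece P u : splitting P -> u \notin cover P ->
  exists2 A, A \in P & (k <= INR #|[set w in A | e u w]|)%R.
Proof.
move=> sP uD; apply: NNPP => no_dense.
pose nbr A := #|[set w in A | e u w]|.
have P_gt0 : 0 < #|P|.
  have /leP/(lt_INR 0) /= D_gt0 : 0 < #|~: cover P| by apply/card_gt0P; exists u; rewrite inE.
  rewrite lt0n; apply/negP => /eqP P0; move: sP.2; rewrite P0 /=; lra.
have [A0 A0P max_A0] := eq_bigmax_cond nbr P_gt0.
have nbr_lt : (INR (nbr A0) < k)%R.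
  apply: Rnot_le_lt => dense; apply: no_dense; by exists A0.
have nbr_sub : [set w | e u w] \subset \bigcup_(A in P) [set w in A | e u w] :|: ~: cover P.
  apply/subsetP => w; rewrite inE => euw; rewrite inE.
  case: (boolP (w \in cover P)) => [/bigcupP [A AP wA] | wD]; last by rewrite inE wD orbT.
  by apply/orP; left; apply/bigcupP; exists A; rewrite // inE wA euw.
have deg_le : delta e <= #|P| * nbr A0 + #|~: cover P|.
  apply: leq_trans (delta_le_degree u) (leq_trans (subset_leq_card nbr_sub) _).
  apply: leq_trans (leq_card_setU _ _) (leq_add (leq_trans (leq_card_bigcup _ _) _) (leqnn _)).
  by rewrite -max_A0 -sum_nat_const; apply: leq_sum => A AP; apply: leq_bigmax_cond.
have /leP/le_INR := deg_le; rewrite plus_INR mult_INR.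
have /leP/le_INR := card_apart_family_le_alpha sP.1.
have := splitting_leftover_le sP; have /leP/(le_INR 1) /= := P_gt0.
nra.
Qed.

Lemma highly_connected_partition : 0 < #|T| ->
  exists Q : {set {set T}}, [/\ partition Q [set: T], #|Q| <= alpha e,
    {in Q, forall B, INR (delta e) + 1 - (INR (alpha e) - 1) * k <= INR #|B|}%R &
    {in Q, forall B, highly_connected B}].
Proof.
case/card_gt0P => x0 _.
have sT : splitting [set [set: T]].
  split; last by rewrite cover1 setCT cards0 cards1 /=; lra.
  split; first by rewrite in_set1 eq_sym; apply/set0Pn; exists x0.
  by move=> A B /set1P -> /set1P ->; rewrite eqxx.
have [P sP hcP] := splitting_highly_connected sT.
have /fin_all_exists [g gP] : forall u, exists A, A \in P /\
    (u \in A \/ u \notin cover P /\ (k <= INR #|[set w in A | e u w]|)%R).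
  move=> u; case: (boolP (u \in cover P)) => [/bigcupP [A AP uA] | uD].
    by exists A; split; [|left].
  have [A AP dense] := leftover_dense_piece sP uD.
  by exists A; split; [|right].
have g_piece u A : A \in P -> u \in A -> g u = A.
  move=> AP uA; have [gu_P [u_gu | [uD _]]] := gP u.
    apply/eqP; apply: contraT => guA.
    by case: (sP.1.2 _ _ gu_P AP guA u u u_gu uA); rewrite eqxx.
  by move: uD => /bigcupP []; exists A.
have blockP B : B \in preim_partition g [set: T] ->
    exists2 A, A \in P & B = A :|: [set u | g u == A] :\: A.
  case/imsetP => x _ ->; exists (g x); first by case: (gP x).
  apply/setP => y; rewrite !inE eq_sym; case: (boolP (y \in g x)) => //= y_gx.
  by rewrite (g_piece y (g x)) ?eqxx //; case: (gP x).
exists (preim_partition g [set: T]); split.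
- exact: preim_partitionP.
- apply: leq_trans (card_apart_family_le_alpha sP.1).
  pose block A := A :|: [set u | g u == A] :\: A.
  apply: leq_trans (leq_imset_card block P); apply/subset_leq_card/subsetP => B.
  by case/blockP => A AP ->; apply: imset_f.
- move=> B /blockP [A AP ->]; apply: Rle_trans (splitting_piece_size sP AP) _.
  exact/le_INR/leP/subset_leq_card/subsetUl.
move=> B /blockP [A AP ->]; apply: highly_connected_setU (hcP A AP) _ => u.
rewrite !inE => /andP [uA /eqP guA]; have [_ [u_gu | [_ dense]]] := gP u.
  by move: u_gu; rewrite guA (negbTE uA).
by rewrite -guA.
Qed.
End Threshold.
End Graph.

Lemma RlebP x y : reflect (x <= y)%R (Rleb x y).
Proof. by rewrite /Rleb; case: Rle_dec => h; constructor. Qed.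

Lemma sum_large_ge_half (I : finType) (Q : {pred I}) (large : pred I) (w : I -> nat) a n :
  0 < a -> #|Q| <= a -> n = \sum_(i in Q) w i ->
  (forall i, i \in Q -> ~~ large i -> a * 10 * w i <= n) ->
  n <= 2 * \sum_(i in Q | large i) w i.
Proof.
move=> a_gt0 Q_le n_sum small_le.
have small_sum : a * (10 * \sum_(i in Q | ~~ large i) w i) <= a * n.
  rewrite mulnA big_distrr /=; apply: (@leq_trans (\sum_(i in Q | ~~ large i) n)).
    by apply: leq_sum => i /andP [iQ si]; apply: small_le.
  apply: (@leq_trans (\sum_(i in Q) n)); first by rewrite [X in _ <= X](bigID large) leq_addl.
  by rewrite sum_nat_const leq_mul2r Q_le orbT.
have n_split : n = \sum_(i in Q | large i) w i + \sum_(i in Q | ~~ large i) w i.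
  by rewrite n_sum [LHS](bigID large).
by move: small_sum; rewrite leq_pmul2l //; lia.
Qed.

Lemma Rleb_small_block (a m n : nat) : 0 < a ->
  ~~ Rleb (0.1 * INR n / INR a) (INR m) -> a * 10 * m <= n.
Proof.
move=> /leP/lt_INR /= a_pos /RlebP /Rnot_le_lt m_lt; apply/leP/INR_le; rewrite !mult_INR.
have -> : INR 10 = 10%R by rewrite /=; lra.
have : (INR a * INR m < INR a * (0.1 * INR n / INR a))%R by apply: Rmult_lt_compat_l.
have -> : (INR a * (0.1 * INR n / INR a) = INR n / 10)%R.
  by rewrite Rmult_comm /Rdiv Rmult_assoc Rinv_l; lra.
lra.
Qed.

Lemma sum_large_blocks_ge_half (T : finType) (Q : {set {set T}}) (a : nat) :
  partition Q [set: T] -> 0 < a -> #|Q| <= a ->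
  (INR (\sum_(A in Q | Rleb (0.1 * INR #|T| / INR a) (INR #|A|)) #|A|) >= INR #|T| / 2)%R.
Proof.
move=> partQ a_gt0 Q_le.
have n_sum : #|T| = \sum_(A in Q) #|A| by rewrite -cardsT; apply: card_partition.
have := sum_large_ge_half (large := fun A : {set T} => Rleb (0.1 * INR #|T| / INR a) (INR #|A|))
  a_gt0 Q_le n_sum (fun A _ => Rleb_small_block a_gt0).
move=> /leP/le_INR; rewrite mult_INR => n_le; apply/Rle_ge/(Rmult_le_reg_l 2); first lra.
have -> : (2 * (INR #|T| / 2) = INR #|T|)%R by field.
by apply: Rle_trans n_le (Req_le _ _ _); congr (Rmult _ _); rewrite /=; lra.
Qed.

Theorem lemma2p12 (T : finType) (e : rel T)
  (e_sym : symmetric e) (e_irr : irreflexive e)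
  (n_ge2 : 2 <= #|T|) :
  exists P : {set {set T}},
    partition P [set: T] /\
    (INR #|P| <= 19 * INR (alpha e) * ln (INR #|T|))%R /\
    (INR (\sum_(A in P | Rleb (0.1 * INR #|T| / INR (alpha e))%R (INR #|A|)) #|A|)
       >= INR #|T| / 2)%R /\
    (forall A, A \in P -> (INR #|A| >= INR (delta e) / ln (INR #|T|))%R) /\
    (forall A, A \in P ->
       (INR (kappa e A) >= INR (delta e) / (20 * INR (alpha e) * ln (INR #|T|)))%R).
Proof.
have n_gt0 : 0 < #|T| by apply: leq_trans n_ge2.
have a_gt0 := alpha_gt0 e_irr n_gt0.
have [Q [partQ Q_le Q_size Q_hc]] := highly_connected_partition e_sym e_irr
  (log_threshold_ge0 (delta e) n_ge2 a_gt0) (log_threshold_mul_le (delta e) n_ge2 a_gt0) n_gt0.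
exists Q; split; first exact: partQ.
split; first exact: INR_le_log_bound.
split; first exact: sum_large_blocks_ge_half.
split=> B BQ; apply: Rle_ge; last exact/kappa_ge/Q_hc.
exact: (log_block_size n_ge2 a_gt0 (delta_lt_card e_irr n_gt0) (Q_size B BQ)).
Qed.
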